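(* Let $N>2$, $1<p<N$, and assume (H1)–(H4). For $a>0$ let $v_a$ be the solution on $[0,T]$ of $$(|v'(t)|^{p-2}v'(t))'+h(t)f(v(t))=0,\qquad v(0)=0,\ v'(0)=a.$$ Then for all sufficiently large $a$, $v_a$ has a first local maximum $M_a\in(0,T)$ (i.e. $v_a'(M_a)=0$ and $v_a'>0$ on $[0,M_a)$), and $M_a\to 0$ and $v_a(M_a)\to\infty$ as $a\to\infty$.
   Context: Standing hypotheses. $f:\mathbb{R}\setminus\{0\}\to\mathbb{R}$ is odd and locally Lipschitz, and: (H1) there is a locally Lipschitz $g_1:\mathbb{R}\to\mathbb{R}$ and $l>p-1$ with $f(u)=|u|^{l-1}u+g_1(u)$ for all large $|u|$, and $\lim_{u\to\infty}|g_1(u)|/|u|^l=0$; (H2) there is a locally Lipschitz $g_2:\mathbb{R}\to\mathbb{R}$ with $g_2(0)=0$ and $0<m<1$ such that $f(u)=-\frac{1}{|u|^{m-1}u}+g_2(u)$ for all small $|u|\neq 0$; (H3) $f$ has a unique positive zero $\beta$, with $f<0$ on $(0,\beta)$ and $f>0$ on $(\beta,\infty)$; (H4) $K>0$ and $K'$ are continuous on $[R,\infty)$ (for a fixed $R>0$), $\frac{rK'(r)}{K(r)}>-\frac{(N-1)p}{p-1}$ on $[R,\infty)$, and there are constants $K_0,K_1>0$ with $\frac{K_0}{r^{\alpha}}\le K(r)\le \frac{K_1}{r^{\alpha_1}}$ on $[R,\infty)$, where $N+\frac{m(N-p)}{p-1}<\alpha_1\le\alpha<2(N-1)$. Notation: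 $T=R^{\frac{p-N}{p-1}}$ and, for $0<t\le T$, $h(t)=\left(\frac{N-p}{p-1}\right)^{-p}t^{\frac{p(N-1)}{p-N}}K\!\left(t^{\frac{p-1}{p-N}}\right)>0$. A solution of the initial value problem on an interval $[0,d]$ means $v\in C^1[0,d]$ such that $t\mapsto h(t)f(v(t))$ is integrable on $(0,t)$ for each $t\le d$ and $|v'(t)|^{p-2}v'(t)=a^{p-1}-\int_0^t h(s)f(v(s))\,ds$, $v(0)=0$; it exists uniquely on $[0,T]$ for each $a>0$. *)

From HB Require Import structures.
From mathcomp Require Import all_boot all_order all_algebra.
From mathcomp Require Import all_classical all_reals all_analysis.
Set Implicit Arguments. Unset Strict Implicit. Unset Printing Implicit Defensive.
Import Order.TTheory GRing.Theory Num.Theory.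
Import numFieldNormedType.Exports.
Local Open Scope classical_set_scope.
Local Open Scope ring_scope.

Section Defs.
Variable R : realType.

Definition deriv_within (A : set R) (v : R -> R) (t l : R) : Prop :=
  (fun s => (v s - v t) / (s - t)) @ within (A `\ t) (nbhs t) --> l.

Definition C1_on (A : set R) (v w : R -> R) : Prop :=
  (forall t, A t -> deriv_within A v t (w t)) /\ {within A, continuous w}.

Definition loc_lipschitz_on (A : set R) (g : R -> R) : Prop :=
  forall x, A x -> exists2 del : R, 0 < del & exists L : R,
    forall y z, A y -> A z -> `|y - x| < del -> `|z - x| < del ->
      `|g y - g z| <= L * `|y - z|.

Definition phi_p (p w : R) : R := (`|w| `^ (p - 2)) * w.

Definition hfun (N : nat) (p : R) (K : R -> R) (t : R) : R :=
  (((N%:R - p) / (p - 1)) `^ (- p)) * (t `^ (p * (N%:R - 1) / (p - N%:R)))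
  * K (t `^ ((p - 1) / (p - N%:R))).

Definition is_solution (N : nat) (p : R) (K f : R -> R) (a d : R)
    (v dv : R -> R) : Prop :=
  C1_on `[0, d] v dv /\ v 0 = 0 /\
  (forall t, 0 < t <= d ->
     (@lebesgue_measure R).-integrable `]0, t[
        (fun s => (hfun N p K s * f (v s))%:E)) /\
  (forall t, 0 <= t <= d ->
     (phi_p p (dv t))%:E = ((a `^ (p - 1))%:E -
        \int[@lebesgue_measure R]_(s in (`]0%R, t[ : set R))
           (hfun N p K s * f (v s))%:E)%E).

End Defs.

(* Compare with the reference solution v_1: near 0 it is positive and small, so
   f(v_1) behaves like -v_1^-m and D = |h f(v_1)| dominates both h and h v_1^-m;
   D is integrable by the very definition of a solution, and it controls every
   singular term below.  For large a let B = kap a^((p-1)/l): B tends to +oo,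
   B = o(a) and B^l is comparable to a^(p-1).  As long as v_a <= B, the integral
   in the equation is too small to bring phi_p(v_a') down to (theta a)^(p-1), so
   v_a' > theta a and v_a passes the level B before any fixed time d.  Afterwards
   f(v_a) >= B^l/2 on [d, 2d], while on (0, d) v_a >= v_1 keeps the negative part
   of the integrand above -(2 + C0) D; this forces phi_p(v_a'(2d)) < 0.  So the
   first zero M_a of v_a' lies before 2d, beyond the time where v_a passes B,
   whence v_a(M_a) >= B.  As d is arbitrary, M_a -> 0 and v_a(M_a) -> +oo. *)

From HB Require Import structures.
From mathcomp Require Import all_boot all_order all_algebra.
From mathcomp Require Import all_classical all_reals all_analysis.
From mathcomp Require Import ring lra.
Set Implicit Arguments. Unset Strict Implicit. Unset Printing Implicit Defensive.
Import Order.TTheory GRing.Theory Num.Theory.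
Import numFieldNormedType.Exports.
Local Open Scope classical_set_scope.
Local Open Scope ring_scope.

Section real_analysis.
Variable R : realType.
Implicit Types (A : set R) (g v w : R -> R).

Lemma near_withinP A (t : R) (P : R -> Prop) :
  (\forall s \near within A (nbhs t), P s) <->
  exists2 d : R, 0 < d & forall s, A s -> `|s - t| < d -> P s.
Proof.
rewrite near_withinE; split.
- by move=> /nbhs_ballP[d d0 H]; exists d => // s As st; apply: H; rewrite // /ball /= distrC.
- move=> [d d0 H]; apply/nbhs_ballP; exists d => // s.
  by rewrite /ball /= distrC => ? ?; apply: H.
Qed.

Lemma within_continuousP A g :
  {within A, continuous g} <-> forall x, A x -> forall e : R, 0 < e ->
    exists2 d : R, 0 < d & forall y, A y -> `|y - x| < d -> `|g y - g x| < e.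
Proof.
rewrite subspace_continuousP; split.
- move=> H x Ax e e0; move/cvgrPdist_lt: (H x Ax) => /(_ e e0) /near_withinP[d d0 Hd].
  by exists d => // y Ay yx; rewrite distrC; apply: Hd.
- move=> H x Ax; apply/cvgrPdist_lt => e e0; apply/near_withinP.
  have [d d0 Hd] := H x Ax e e0; exists d => // y Ay yx.
  by rewrite distrC; apply: Hd.
Qed.

Lemma deriv_withinP A g t l : deriv_within A g t l ->
  forall e, 0 < e -> exists2 d : R, 0 < d & forall s, A s -> s != t ->
    `|s - t| < d -> `|(g s - g t) / (s - t) - l| < e.
Proof.
move=> H e e0; move/cvgrPdist_lt: H => /(_ e e0) /near_withinP[d d0 Hd].
by exists d => // s As st sd; rewrite distrC; apply: Hd => //; split => //; apply/eqP.
Qed.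

Lemma deriv_within_continuous A g w :
  (forall t, A t -> deriv_within A g t (w t)) -> {within A, continuous g}.
Proof.
move=> H; apply/within_continuousP => x Ax e e0.
have [d d0 Hd] := deriv_withinP (H x Ax) ltr01.
pose c := `|w x| + 1.
have c0 : 0 < c by rewrite ltr_wpDl.
exists (Num.min d (e / c)); first by rewrite lt_min d0 divr_gt0.
move=> y Ay; rewrite lt_min => /andP[yd ye].
have [->|yx] := eqVneq y x; first by rewrite subrr normr0.
have quot : `|(g y - g x) / (y - x)| < c.
  rewrite -[X in `|X|](subrK (w x)) /c addrC.
  by rewrite (le_lt_trans (ler_normD _ _)) // ltrD2l Hd.
have -> : g y - g x = (g y - g x) / (y - x) * (y - x) by rewrite divfK // subr_eq0.
rewrite normrM; apply: (le_lt_trans (y := c * `|y - x|)); first by rewrite ler_wpM2r // ltW.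
by rewrite mulrC -ltr_pdivlMr.
Qed.

Lemma deriv_within_is_derive (a b x : R) g l :
  deriv_within `[a, b] g x l -> a < x < b -> is_derive x 1 g l.
Proof.
move=> H /andP[ax xb].
suff L : (fun h => h^-1 *: ((g \o shift x) (h *: 1) - g x)) @ 0^' --> l.
  have D : derivable g x 1 by apply/cvg_ex; exists l.
  by split => //; rewrite /derive; exact: cvg_lim L.
apply/cvgrPdist_lt => e e0.
have [d d0 Hd] := deriv_withinP H e0.
pose d' := Num.min d (Num.min (x - a) (b - x)).
have d'0 : 0 < d' by rewrite !lt_min d0 !subr_gt0 ax xb.
rewrite /dnbhs near_withinE; apply/nbhs_ballP; exists d' => // h.
rewrite /ball /= sub0r normrN !lt_min => /and3P[hd ha hb] h0.
rewrite distrC /= scaler1 /shift.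
have -> : h^-1 *: (g (h + x) - g x) = (g (h + x) - g x) / (h + x - x).
  by rewrite addrK mulrC.
apply: Hd; last by rewrite addrK.
- rewrite /= in_itv /=; have := ler_norm h; have := ler_norm (- h); rewrite normrN.
  by move: ha hb; lra.
- by rewrite -subr_eq0 addrK.
Qed.

Lemma C1_on_MVT (a b : R) v w x y : C1_on `[a, b] v w -> a <= x -> x < y -> y <= b ->
  exists2 c, x < c < y & v y - v x = w c * (y - x).
Proof.
move=> [Hd _] ax xy yb.
have itv c : x <= c <= y -> [set` `[a, b]] c.
  by move=> /andP[xc cy]; rewrite /= in_itv /= (le_trans ax xc) (le_trans cy yb).
have der c : c \in `]x, y[ -> is_derive c 1 v (w c).
  rewrite in_itv /= => /andP[xc cy].
  apply: (@deriv_within_is_derive a b); first by apply: Hd; apply: itv; rewrite !ltW.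
  by rewrite (le_lt_trans ax xc) (lt_le_trans cy yb).
have cont : {within `[x, y], continuous v}.
  apply: (@continuous_subspaceW _ _ _ `[a, b]); first by move=> c /=; rewrite in_itv /= => /itv.
  exact: deriv_within_continuous Hd.
have [c] := MVT xy der cont.
by rewrite in_itv /= => /andP[xc cy] E; exists c => //; rewrite xc cy.
Qed.

Lemma C1_on_ge_slope (a b : R) v w x y k : C1_on `[a, b] v w ->
  a <= x -> x <= y -> y <= b ->
  (forall c, x < c < y -> k <= w c) -> k * (y - x) <= v y - v x.
Proof.
move=> C ax; rewrite le_eqVlt => /predU1P[<-|xy] yb H; first by rewrite !subrr mulr0.
have [c /H kc ->] := C1_on_MVT C ax xy yb.
by rewrite ler_wpM2r // subr_ge0 ltW.
Qed.

Lemma C1_on_le_slope (a b : R) v w x y k : C1_on `[a, b] v w ->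
  a <= x -> x <= y -> y <= b ->
  (forall c, x < c < y -> w c <= k) -> v y - v x <= k * (y - x).
Proof.
move=> C ax; rewrite le_eqVlt => /predU1P[<-|xy] yb H; first by rewrite !subrr mulr0.
have [c /H kc ->] := C1_on_MVT C ax xy yb.
by rewrite ler_wpM2r // subr_ge0 ltW.
Qed.

(* The infimum of an empty set is 0: first_hit is only meaningful together
   with a witness, as in first_hitP. *)
Definition first_hit (d c : R) g := inf [set t : R | 0 <= t <= d /\ g t <= c].

Lemma first_hitP (d c t : R) g : {within `[0, d], continuous g} -> c < g 0 ->
  0 <= t <= d -> g t <= c ->
  [/\ 0 < first_hit d c g, first_hit d c g <= t, g (first_hit d c g) = c &
      forall u, 0 <= u < first_hit d c g -> c < g u].
Proof.
move=> /within_continuousP gc g0 td gt.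
set S := [set t : R | 0 <= t <= d /\ g t <= c]; set M := first_hit d c g.
have lbS : has_lbound S by exists 0 => y [/andP[]].
have hS : has_inf S by split; first by exists t.
have Mlb u : 0 <= u <= d -> g u <= c -> M <= u by move=> ud gu; apply: ge_inf.
have Mt : M <= t := Mlb t td gt.
have M0 : 0 <= M by apply: lb_le_inf => [|y [/andP[]]] //; exists t.
have Md : M <= d by case/andP: td => _; exact: le_trans.
have Mitv : [set` `[0, d]] M by rewrite /= in_itv /= M0 Md.
have below u : 0 <= u < M -> c < g u.
  move=> /andP[u0 uM]; rewrite ltNge; apply/negP => /(Mlb u).
  by rewrite u0 (le_trans (ltW uM) Md) leNgt uM => /(_ isT).
have gMc : g M <= c.
  rewrite leNgt; apply/negP => cgM.
  have [del del0 Hd] := gc M Mitv (g M - c) ltac:(by rewrite subr_gt0).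
  have [y [/andP[y0 yd] gy] yM] := inf_adherent del0 hS.
  have My : M <= y by apply: Mlb; rewrite ?y0.
  have := Hd y ltac:(by rewrite /= in_itv /= y0); rewrite ger0_norm ?subr_ge0 //.
  by rewrite ltrBlDl => /(_ yM); rewrite ltr_norml; lra.
have Mpos : 0 < M by rewrite lt_neqAle M0 andbT; apply: contraTneq gMc => <-; rewrite -ltNge.
split => //; apply/eqP; rewrite eq_le gMc /= leNgt; apply/negP => gMc'.
have [del del0 Hd] := gc M Mitv (c - g M) ltac:(by rewrite subr_gt0).
pose u := Num.max 0 (M - del / 2).
have uM : 0 <= u < M by rewrite le_max lexx gt_max Mpos /= ltrBlDr ltrDl divr_gt0.
have := below u uM; have /andP[u0 uM'] := uM.
have := Hd u ltac:(by rewrite /= in_itv /= u0 (le_trans (ltW uM') Md)).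
rewrite ltr0_norm ?subr_lt0 // opprB /u ltr_norml.
have [h|h] := leP 0 (M - del / 2); lra.
Qed.

Lemma continuous_bounded (a b : R) g : {within `[a, b], continuous g} ->
  exists C : R, forall t, a <= t <= b -> `|g t| <= C.
Proof.
move=> gc; have [ab|ba] := leP a b; last by exists 0 => t /andP[]; lra.
have [c1 _ H1] := EVT_max ab gc; have [c2 _ H2] := EVT_min ab gc.
exists (`|g c1| + `|g c2|) => t tab.
have := H1 t tab; have := H2 t tab.
have := ler_norm (g c1); have := ler_norm (- g c2); rewrite normrN ler_norml.
have := normr_ge0 (g c1); have := normr_ge0 (g c2).
by move=> *; apply/andP; split; lra.
Qed.

Lemma loc_lipschitz_continuous A g : loc_lipschitz_on A g -> {within A, continuous g}.
Proof.
move=> H; apply/within_continuousP => x Ax e e0.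
have [del del0 [L HL]] := H x Ax.
pose L' := `|L| + 1.
have L'0 : 0 < L' by rewrite /L' ltr_wpDl.
exists (Num.min del (e / L')); first by rewrite lt_min del0 divr_gt0.
move=> y Ay; rewrite lt_min => /andP[yd ye].
have := HL y x Ay Ax yd; rewrite subrr normr0 => /(_ del0) /le_lt_trans; apply.
apply: (le_lt_trans (y := L' * `|y - x|)).
  by rewrite ler_wpM2r // (le_trans (ler_norm L)) // /L' lerDl.
by rewrite mulrC -ltr_pdivlMr.
Qed.

End real_analysis.

Section powers.
Variable R : realType.
Implicit Types x y q : R.

Lemma ler_powR2r x y q : 0 <= q -> 0 <= x -> x <= y -> x `^ q <= y `^ q.
Proof. by move=> q0 x0 xy; rewrite ge0_ler_powR // nnegrE // (le_trans x0). Qed.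

Lemma ltr_powR2r x y q : 0 < q -> 0 <= x -> x < y -> x `^ q < y `^ q.
Proof. by move=> q0 x0 xy; rewrite gt0_ltr_powR // nnegrE // ltW // (le_lt_trans x0). Qed.

Lemma lef_powRV2 x y q : 0 <= q -> 0 < y -> y <= x -> (x `^ q)^-1 <= (y `^ q)^-1.
Proof.
move=> q0 y0 yx; rewrite lef_pV2 ?posrE ?powR_gt0 ?(lt_le_trans y0) //.
by rewrite ler_powR2r // ltW.
Qed.

Lemma powR_ge_min x y q t : 0 < x -> x <= t <= y ->
  Num.min (x `^ q) (y `^ q) <= t `^ q.
Proof.
move=> x0 /andP[xt ty]; have t0 : 0 < t := lt_le_trans x0 xt.
rewrite ge_min; have [q0|q0] := leP 0 q; first by rewrite (ler_powR2r q0 (ltW x0) xt).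
have y0 : 0 < y := lt_le_trans t0 ty.
apply/orP; right; rewrite -[q]opprK !(powRN _ (- q)) lef_pV2 ?posrE ?powR_gt0 //.
by apply: ler_powR2r => //; [rewrite oppr_ge0 ltW | exact: ltW].
Qed.

Lemma powR_eventually_gt q Y : 0 < q -> \forall a \near +oo, Y < a `^ q.
Proof.
move=> q0; exists ((`|Y| + 1) `^ q^-1); split; first exact: num_real.
move=> a aA; have := ltr_powR2r q0 (powR_ge0 _ _) aA.
rewrite -powRrM mulVf ?gt_eqF // powRr1 ?addr_ge0 //.
by have := ler_norm Y; lra.
Qed.

Lemma powR_eventually_lt q Y : q < 0 -> 0 < Y -> \forall a \near +oo, a `^ q < Y.
Proof.
move=> q0 Y0; have [A [_ HA]] := @powR_eventually_gt (- q) Y^-1 ltac:(by rewrite oppr_gt0).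
exists (Num.max 0 A); split; first exact: num_real.
move=> a; rewrite gt_max => /andP[a0 /HA aA].
by rewrite -[q]opprK powRN -[Y]invrK ltf_pV2 ?posrE ?invr_gt0 ?powR_gt0.
Qed.

End powers.

Section phi_p.
Variable R : realType.
Implicit Types p w c a : R.

Lemma phi_pE p w : 1 < p -> 0 < w -> phi_p p w = w `^ (p - 1).
Proof.
move=> p1 w0; rewrite /phi_p gtr0_norm // mulrC.
have -> : p - 2 = (p - 1) - 1 by ring.
by rewrite mulr_powRB1 ?ltW // subr_gt0.
Qed.

Lemma phi_p_ge0 p w : 0 <= w -> 0 <= phi_p p w.
Proof. by move=> w0; rewrite /phi_p mulr_ge0 // powR_ge0. Qed.

Lemma phi_p_le0 p w : w <= 0 -> phi_p p w <= 0.
Proof. by move=> w0; rewrite /phi_p mulr_ge0_le0 // powR_ge0. Qed.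

Lemma phi_p_lt0 p w : phi_p p w < 0 -> w < 0.
Proof. by apply: contraTlt => w0; rewrite -leNgt phi_p_ge0. Qed.

Lemma lt_phi_p p c w : 1 < p -> 0 < c -> c `^ (p - 1) < phi_p p w -> c < w.
Proof.
move=> p1 c0; have [w0|w0] := leP w 0.
  by rewrite ltNge (le_trans (phi_p_le0 p w0)) ?powR_ge0.
rewrite phi_pE //; apply: contraTlt => wc; rewrite -leNgt.
by apply: ler_powR2r => //; [rewrite subr_ge0 ltW | exact: ltW].
Qed.

Definition theta p : R := 2^-1 `^ (p - 1)^-1.

Lemma theta_gt0 p : 0 < theta p.
Proof. by rewrite powR_gt0. Qed.

Lemma theta_powR p a : 1 < p -> 0 <= a -> (theta p * a) `^ (p - 1) = a `^ (p - 1) / 2.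
Proof.
move=> p1 a0; rewrite powRM ?(ltW (theta_gt0 p)) // -powRrM mulVf ?powRr1.
- by rewrite mulrC.
- by rewrite invr_ge0.
- by rewrite subr_eq0 gt_eqF.
Qed.

End phi_p.

Section nonlinearity.
Variable R : realType.
Variables (f g1 g2 : R -> R) (l m beta : R).
Hypothesis l_gt0 : 0 < l.
Hypothesis m_gt0 : 0 < m.
Hypothesis f_lip : loc_lipschitz_on [set u | u != 0] f.
Hypothesis f_infty : exists U : R, forall u, U < `|u| -> f u = `|u| `^ (l - 1) * u + g1 u.
Hypothesis g1_small : (fun u => `|g1 u| / `|u| `^ l) @ +oo --> (0 : R).
Hypothesis g2_lip : loc_lipschitz_on setT g2.
Hypothesis g2_0 : g2 0 = 0.
Hypothesis f_0 : exists2 del : R, 0 < del & forall u, 0 < `|u| < del ->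
  f u = - (1 / (`|u| `^ (m - 1) * u)) + g2 u.
Hypothesis beta_gt0 : 0 < beta.
Hypothesis f_lt0 : forall u, 0 < u < beta -> f u < 0.
Hypothesis f_gt0 : forall u, beta < u -> 0 < f u.

Lemma f_continuous_itv x y : 0 < x -> {within `[x, y], continuous f}.
Proof.
move=> x0; apply: continuous_subspaceW (loc_lipschitz_continuous f_lip) => u /=.
by rewrite in_itv /= => /andP[xu _]; rewrite gt_eqF // (lt_le_trans x0 xu).
Qed.

Lemma f_large : exists2 X : R, 0 < X & forall x, X <= x ->
  x `^ l / 2 <= f x /\ f x <= 2 * x `^ l.
Proof.
have [U HU] := f_infty.
move/cvgrPdist_lt: g1_small => /(_ (1/2) ltac:(lra)) [M [_ HM]].
exists (Num.max (Num.max M U) 1 + 1); first by rewrite ltr_wpDl // le_max ler01 orbT.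
move=> x; rewrite -lerBrDr !ge_max => /andP[/andP[Mx Ux] x1].
have x0 : 0 < x by lra.
have := HM x ltac:(lra); rewrite sub0r normrN ger0_norm ?divr_ge0 ?powR_ge0 //.
rewrite (gtr0_norm x0) ltr_pdivrMr ?powR_gt0 // => Hg.
have -> : f x = x `^ l + g1 x.
  rewrite HU; last by rewrite gtr0_norm //; lra.
  by rewrite gtr0_norm // mulrC mulr_powRB1 // ltW.
have := ler_norm (g1 x); have := ler_norm (- g1 x); rewrite normrN.
have := powR_gt0 l x0; lra.
Qed.

Lemma f_near0 : exists2 x0 : R, 0 < x0 & forall x, 0 < x < x0 ->
  [/\ f x <= -1, f x <= - (x `^ m)^-1 / 2 & - (x `^ m)^-1 - 1 <= f x].
Proof.
have [del del0 Hd] := f_0.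
have /within_continuousP /(_ 0 I 1 ltr01) [d d0 Hg] := loc_lipschitz_continuous g2_lip.
pose x1 : R := 2^-1 `^ m^-1.
exists (Num.min del (Num.min d x1)); first by rewrite !lt_min del0 d0 powR_gt0.
move=> x /andP[x0]; rewrite !lt_min => /and3P[xdel xd xx1].
have xm : x `^ m < 2^-1.
  have -> : (2^-1 : R) = x1 `^ m by rewrite /x1 -powRrM mulVf ?gt_eqF ?powRr1.
  by rewrite ltr_powR2r ?ltW.
have xm0 : 0 < x `^ m by rewrite powR_gt0.
have fE : f x = - (x `^ m)^-1 + g2 x.
  by rewrite Hd ?gtr0_norm ?x0 // [x `^ _ * x]mulrC mulr_powRB1 ?ltW // div1r.
have g2x : `|g2 x| < 1 by have := Hg x I; rewrite subr0 g2_0 subr0 gtr0_norm // => /(_ xd).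
have xm2 : 2 <= (x `^ m)^-1 by rewrite -[2]invrK lef_pV2 ?posrE ?ltW.
have := ler_norm (g2 x); have := ler_norm (- g2 x); rewrite normrN fE.
by split; lra.
Qed.

Lemma f_ge_singular : exists2 C : R, 0 <= C & forall x, 0 < x ->
  - (x `^ m)^-1 - C <= f x.
Proof.
have [x0 x00 Hs] := f_near0.
have [Cb HCb] := continuous_bounded (f_continuous_itv (y := beta) x00).
exists (1 + `|Cb|); first by rewrite addr_ge0 // normr_ge0.
move=> x x_0.
have := ler_norm Cb; have := normr_ge0 Cb.
have : 0 <= (x `^ m)^-1 by rewrite invr_ge0 powR_ge0.
have [xx0|x0x] := ltP x x0; first by have [_ _] := Hs x ltac:(by rewrite x_0 xx0); lra.
have [xb|bx] := leP x beta; last by have := f_gt0 bx; lra.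
have := HCb x ltac:(by rewrite x0x xb); have := ler_norm (- f x); rewrite normrN; lra.
Qed.

Lemma f_le_powR : exists2 C : R, 0 <= C & forall x, 0 < x -> f x <= 2 * x `^ l + C.
Proof.
have [X X0 HX] := f_large.
have [Cb HCb] := continuous_bounded (f_continuous_itv (y := X) beta_gt0).
exists `|Cb|; first by rewrite normr_ge0.
move=> x x_0.
have := normr_ge0 Cb; have : 0 <= x `^ l by rewrite powR_ge0.
have [xb|bx] := ltP x beta; first by have := f_lt0 (ltac:(by rewrite x_0 xb) : 0 < x < beta); lra.
have [xX|Xx] := leP x X; last by have [_] := HX x (ltW Xx); lra.
have := HCb x ltac:(by rewrite bx xX); have := ler_norm Cb; have := ler_norm (f x); lra.
Qed.

End nonlinearity.

Section interval_integrals.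
Variable R : realType.
Local Notation mu := (@lebesgue_measure R).
(* lebesgue_measure lives on a sigma-algebra whose display differs from that of
   measurable_itv, so library lemmas must be given mu explicitly; the _itv
   wrappers below do it once. *)
Implicit Types (F : R -> R) (a b c : R).

Lemma EFin_integral_eqB (x y : R) F (i : interval R) :
  mu.-integrable [set` i] (EFin \o F) ->
  x%:E = (y%:E - \int[mu]_(s in [set` i]) (F s)%:E)%E ->
  x = y - \int[mu]_(s in [set` i]) F s.
Proof.
move=> iF; rewrite /Rintegral.
have := @integrable_fin_num _ _ _ mu _ (measurable_itv i) _ iF.
by case: (\int[mu]_(s in _) (F s)%:E)%E => //= r _; rewrite -EFinB => -[].
Qed.

Lemma integrable_itvS (i j : interval R) F : [set` i] `<=` [set` j] ->
  mu.-integrable [set` j] (EFin \o F) -> mu.-integrable [set` i] (EFin \o F).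
Proof. exact: (@integrableS _ _ _ mu _ _ _ (measurable_itv _) (measurable_itv _)). Qed.

Lemma integrableZl_itv (i : interval R) F (k : R) :
  mu.-integrable [set` i] (EFin \o F) -> mu.-integrable [set` i] (EFin \o (fun x => k * F x)).
Proof.
move=> iF; have := @integrableZl _ _ _ mu _ (measurable_itv i) k _ iF.
by apply: (@eq_integrable _ _ _ mu _ (measurable_itv i)) => x _ /=; rewrite EFinM.
Qed.

Lemma RintegralZl_itv (i : interval R) F (k : R) : mu.-integrable [set` i] (EFin \o F) ->
  \int[mu]_(x in [set` i]) (k * F x) = k * \int[mu]_(x in [set` i]) F x.
Proof. exact: (@RintegralZl _ _ _ mu _ _ _ (measurable_itv i)). Qed.

Lemma le_Rintegral_itv (i : interval R) F1 F2 :
  mu.-integrable [set` i] (EFin \o F1) -> mu.-integrable [set` i] (EFin \o F2) ->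
  (forall x, x \in i -> F1 x <= F2 x) ->
  \int[mu]_(x in [set` i]) F1 x <= \int[mu]_(x in [set` i]) F2 x.
Proof. by move=> ? ? H; apply: (@le_Rintegral _ _ _ mu _ _ _ (measurable_itv i)) => // x /H. Qed.

Lemma integral_itv_small b F : mu.-integrable `]0, b[ (EFin \o F) ->
  forall e, 0 < e -> exists2 r : R, 0 < r & forall s, 0 <= s <= b -> s < r ->
    \int[mu]_(x in `]0, s[) `|F x| < e.
Proof.
move=> iF e e0.
have iG : mu.-integrable setT (EFin \o (F \_ `]0, b[)).
  by rewrite -restrict_EFin; apply/(integrable_mkcond _ _).1.
have [r [r0 H]] := integral_normr_continuous iG e0.
exists r => // s /andP[s0 sb] sr.
have -> : \int[mu]_(x in `]0, s[) `|F x| = \int[mu]_(x in `]0, s[) `|(F \_ `]0, b[) x|.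
  apply: eq_Rintegral => x; rewrite inE /= in_itv /= => /andP[x0 xs].
  by rewrite patchE ifT // inE /= in_itv /= x0 (lt_le_trans xs sb).
apply: H => //.
change (lebesgue_measure ([set` `]0, s[%R] : set R) < r%:E)%E.
by rewrite lebesgue_measure_itv /= lte_fin; case: ifP; rewrite lte_fin // subr0.
Qed.

Lemma Rintegral_itv_split a b c F : a < b -> b <= c ->
  mu.-integrable `]a, c[ (EFin \o F) ->
  \int[mu]_(x in `]a, c[) F x = \int[mu]_(x in `]a, b[) F x + \int[mu]_(x in `[b, c[) F x.
Proof.
move=> ab bc iF; rewrite (@itv_bndbnd_setU _ _ _ (BLeft b)) ?bnd_simp //.
rewrite (@Rintegral_setU _ _ _ mu _ _ _ (measurable_itv _) (measurable_itv _)) //.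
  by rewrite -itv_bndbnd_setU // bnd_simp.
apply/disj_set2P; rewrite -subset0 => z /=; rewrite !in_itv /=.
by move=> -[/andP[_ zb] /andP[bz _]]; move: zb; rewrite ltNge bz.
Qed.

Lemma Rintegral_itv_ge_cst a b c F : a <= b -> mu.-integrable `[a, b[ (EFin \o F) ->
  (forall x, a <= x < b -> c <= F x) -> c * (b - a) <= \int[mu]_(x in `[a, b[) F x.
Proof.
move=> ab iF Fc.
have mu_ab : lebesgue_measure ([set` `[a, b[%R] : set R) = (b - a)%:E.
  rewrite lebesgue_measure_itv /= lte_fin; case: ltP => [_|ba]; first by rewrite -EFinD.
  have -> : b = a by apply/eqP; rewrite eq_le ab ba.
  by rewrite subrr.
have -> : c * (b - a) = \int[mu]_(x in `[a, b[) c.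
  rewrite (@Rintegral_cst _ _ _ mu _ (measurable_itv _)).
  by change (c * (b - a) = c * fine (lebesgue_measure ([set` `[a, b[%R] : set R))); rewrite mu_ab.
apply: (@le_Rintegral _ _ _ mu _ _ _ (measurable_itv _)) => //.
  apply: (@measurable_bounded_integrable _ _ _ mu _ _ (measurable_itv `[a, b[)).
  - by change (lebesgue_measure ([set` `[a, b[%R] : set R) < +oo)%E; rewrite mu_ab ltry.
  - exact: measurable_cst.
  - by exists `|c|; split => // r cr x _ /=; rewrite (le_trans _ (ltW cr)).
Qed.

End interval_integrals.

Section weight.
Variable R : realType.
Variables (N : nat) (p : R) (K : R -> R) (R0 K0 alpha : R).
Hypothesis p_gt1 : 1 < p.
Hypothesis p_ltN : p < N%:R.
Hypothesis R0_gt0 : 0 < R0.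
Hypothesis K_gt0 : forall r, R0 <= r -> 0 < K r.
Hypothesis K0_gt0 : 0 < K0.
Hypothesis K_ge : forall r, R0 <= r -> K0 / r `^ alpha <= K r.

Let T := R0 `^ ((p - N%:R) / (p - 1)).

(* t ^ ((p - 1) / (p - N)) is the radius r of the original problem, and
   0 < t <= T corresponds to r >= R0. *)
Lemma hfun_arg_ge t : 0 < t <= T -> R0 <= t `^ ((p - 1) / (p - N%:R)).
Proof.
move=> /andP[t0 tT].
have q0 : 0 <= (p - 1) / (N%:R - p) by rewrite divr_ge0 // subr_ge0 ltW.
have -> : (p - 1) / (p - N%:R) = - ((p - 1) / (N%:R - p)) by rewrite -mulrN -invrN opprB.
have -> : R0 = (T `^ ((p - 1) / (N%:R - p)))^-1.
  rewrite /T -powRrM -powRN.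
  have -> : - ((p - N%:R) / (p - 1) * ((p - 1) / (N%:R - p))) = 1.
    by field; rewrite ?subr_eq0 ?gt_eqF ?lt_eqF //; lra.
  by rewrite powRr1 // ltW.
by rewrite powRN lef_powRV2.
Qed.

Lemma hfun_gt0 t : 0 < t <= T -> 0 < hfun N p K t.
Proof.
move=> tT; rewrite /hfun !mulr_gt0 ?powR_gt0 ?K_gt0 ?hfun_arg_ge //.
  by rewrite divr_gt0 // subr_gt0.
by case/andP: tT.
Qed.

Lemma hfun_ge_itv d e : 0 < d -> d <= e -> e <= T ->
  exists2 hm : R, 0 < hm & forall t, d <= t <= e -> hm <= hfun N p K t.
Proof.
move=> d0 de eT.
pose e1 := p * (N%:R - 1) / (p - N%:R).
pose e2 := - ((p - 1) / (p - N%:R) * alpha).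
pose c := ((N%:R - p) / (p - 1)) `^ (- p).
have c0 : 0 < c by rewrite powR_gt0 // divr_gt0 // subr_gt0.
exists (c * K0 * Num.min (d `^ e1) (e `^ e1) * Num.min (d `^ e2) (e `^ e2)).
  have e0 : 0 < e := lt_le_trans d0 de.
  by rewrite !mulr_gt0 // lt_min !powR_gt0.
move=> t /andP[dt te]; have t0 : 0 < t := lt_le_trans d0 dt.
have tT : 0 < t <= T by rewrite t0 (le_trans te eT).
have Kt := K_ge (hfun_arg_ge tT).
have KtE : K0 / (t `^ ((p - 1) / (p - N%:R))) `^ alpha = K0 * t `^ e2.
  by rewrite -powRrM /e2 powRN.
rewrite /hfun -/c -/e1 -!mulrA ler_pM2l // [X in _ <= X]mulrC.
apply: (le_trans _ (ler_wpM2r (powR_ge0 _ _) Kt)); rewrite KtE -mulrA ler_pM2l //.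
by rewrite mulrC ler_pM ?le_min ?powR_ge0 ?powR_ge_min ?dt.
Qed.

End weight.

Section shooting.
Variable R : realType.
Local Notation mu := (@lebesgue_measure R).
Variables (p l m T x0 X C0 Cf : R) (f h : R -> R) (v dv : R -> R -> R).
Hypothesis p_gt1 : 1 < p.
Hypothesis l_gt : p - 1 < l.
Hypothesis m_ge0 : 0 <= m.
Hypothesis T_gt0 : 0 < T.
Hypothesis x0_gt0 : 0 < x0.
Hypothesis f_le_near0 : forall x, 0 < x < x0 -> f x <= -1 /\ f x <= - (x `^ m)^-1 / 2.
Hypothesis f_ge_large : forall x, X <= x -> x `^ l / 2 <= f x.
Hypothesis C0_ge0 : 0 <= C0.
Hypothesis f_ge : forall x, 0 < x -> - (x `^ m)^-1 - C0 <= f x.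
Hypothesis Cf_ge0 : 0 <= Cf.
Hypothesis f_le : forall x, 0 < x -> f x <= 2 * x `^ l + Cf.
Hypothesis h_gt0 : forall t, 0 < t <= T -> 0 < h t.
Hypothesis h_ge : forall d e, 0 < d -> d <= e -> e <= T ->
  exists2 hm : R, 0 < hm & forall t, d <= t <= e -> hm <= h t.
Let G a u := h u * f (v a u).

Hypothesis sol_C1 : forall a, 0 < a -> C1_on `[0, T] (v a) (dv a).
Hypothesis sol_v0 : forall a, 0 < a -> v a 0 = 0.
Hypothesis sol_int : forall a t, 0 < a -> 0 <= t <= T ->
  mu.-integrable `]0, t[ (EFin \o G a).
Hypothesis sol_eq : forall a t, 0 < a -> 0 <= t <= T ->
  phi_p p (dv a t) = a `^ (p - 1) - \int[mu]_(s in `]0, t[) G a s.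

Let l_gt0 : 0 < l. Proof. by move: p_gt1 l_gt; lra. Qed.

Lemma dv_gt_theta a : 0 < a -> theta p * a < dv a 0.
Proof.
move=> a0; apply: (lt_phi_p p_gt1); first by rewrite mulr_gt0 ?theta_gt0.
rewrite sol_eq ?lexx ?ltW //.
rewrite set_itv_ge ?bnd_simp ?ltxx // Rintegral_set0 subr0 theta_powR ?ltW //.
by rewrite ltr_pdivrMr // ltr_pMr ?powR_gt0 // ltr1n.
Qed.

Lemma dv_continuous a : 0 < a -> {within `[0, T], continuous (dv a)}.
Proof. by move=> a0; case: (sol_C1 a0). Qed.

Lemma v_ge_slope a t k : 0 < a -> 0 <= t <= T -> (forall u, 0 < u < t -> k <= dv a u) ->
  k * t <= v a t.
Proof.
move=> a0 /andP[t0 tT] H.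
by have := C1_on_ge_slope (sol_C1 a0) (lexx 0) t0 tT H; rewrite sol_v0 // !subr0.
Qed.

Lemma v_nondecreasing a x y : 0 < a -> 0 <= x -> x <= y -> y <= T ->
  (forall u, x < u < y -> 0 <= dv a u) -> v a x <= v a y.
Proof.
move=> a0 x_ge0 xy yT H; rewrite -subr_ge0.
by have := C1_on_ge_slope (sol_C1 a0) x_ge0 xy yT H; rewrite mul0r.
Qed.

Let level kap a := kap * a `^ ((p - 1) / l).

Lemma level_powR kap a : 0 < kap -> 0 < a -> level kap a `^ l = kap `^ l * a `^ (p - 1).
Proof. by move=> kap0 a0; rewrite /level powRM ?(ltW kap0) ?powR_ge0 // -powRrM mulfVK // gt_eqF. Qed.

Lemma level_eventually kap Y c : 0 < kap -> 0 < c -> \forall a \near +oo,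
  Y <= level kap a /\ 2 * level kap a < theta p * a * c.
Proof.
move=> kap0 c0; rewrite /level; set r := (p - 1) / l.
have r0 : 0 < r by rewrite divr_gt0 // subr_gt0.
have r1 : r - 1 < 0 by rewrite subr_lt0 ltr_pdivrMr // mul1r.
near=> a.
have a0 : 0 < a by near: a; apply: nbhs_pinfty_gt; exact: num_real.
split.
  have : Y / kap < a `^ r by near: a; exact: powR_eventually_gt.
  by rewrite ltr_pdivrMr // mulrC => /ltW.
have : a `^ (r - 1) < theta p * c / (2 * kap).
  by near: a; apply: powR_eventually_lt; rewrite // !mulr_gt0 ?invr_gt0 ?mulr_gt0 ?theta_gt0.
move=> small_r; rewrite -(mulr_powRB1 (ltW a0) r0).
have -> : 2 * (kap * (a * a `^ (r - 1))) = a * (a `^ (r - 1) * (2 * kap)) by ring.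
have -> : theta p * a * c = a * (theta p * c) by ring.
by rewrite ltr_pM2l // -ltr_pdivlMr ?mulr_gt0.
Unshelve. all: end_near.
Qed.

Lemma reference_linear_bound : exists2 C1 : R, 1 <= C1 &
  forall u, 0 <= u <= T -> v 1 u <= C1 * u.
Proof.
have [Cb HCb] := continuous_bounded (dv_continuous ltr01).
exists (`|Cb| + 1); first by rewrite lerDr normr_ge0.
move=> u /andP[u0 uT].
have := C1_on_le_slope (sol_C1 ltr01) (lexx 0) u0 uT (k := `|Cb| + 1).
rewrite sol_v0 // !subr0; apply => c /andP[c0 cu].
have := HCb c ltac:(by rewrite ltW //= (le_trans (ltW cu))).
by have := ler_norm (dv 1 c); have := ler_norm Cb; lra.
Qed.

Lemma reference_gt0_near0 : exists2 s : R, 0 < s <= T & forall u, 0 < u <= s -> 0 < v 1 u.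
Proof.
have dv10 : 0 < dv 1 0 by rewrite (lt_trans _ (dv_gt_theta ltr01)) // mulr1 theta_gt0.
have /within_continuousP := dv_continuous ltr01.
move=> /(_ 0 ltac:(by rewrite /= in_itv /= lexx ltW) (dv 1 0 / 2)) [|del del0 Hdel]; first by rewrite divr_gt0.
exists (Num.min (del / 2) T) => [|u /andP[u0]]; first by rewrite lt_min T_gt0 divr_gt0 //= ge_min lexx orbT.
rewrite le_min => /andP[udel uT].
apply: lt_le_trans (v_ge_slope (k := dv 1 0 / 2) ltr01 _ _); first by rewrite mulr_gt0 ?divr_gt0.
  by rewrite ltW.
move=> c /andP[c0 cu]; have cdel : `|c - 0| < del by rewrite subr0 gtr0_norm //; lra.
have := Hdel c ltac:(by rewrite /= in_itv /= ltW //= ltW // (lt_le_trans cu)) cdel.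
by rewrite ltr_norml => /andP[]; lra.
Qed.

Let D u := `|G 1 u|.

Lemma reference_dominates : exists C1 s1 : R,
  [/\ 1 <= C1, 0 < s1, s1 <= T & forall u, 0 <= u <= T -> v 1 u <= C1 * u] /\
  forall u, 0 < u < s1 -> [/\ 0 < v 1 u, h u <= D u & h u * (v 1 u `^ m)^-1 <= 2 * D u].
Proof.
have [C1 C11 HC] := reference_linear_bound.
have [sp /andP[sp0 spT] Hsp] := reference_gt0_near0.
have C10 : 0 < C1 by lra.
exists C1, (Num.min sp (x0 / C1)); split.
  by split; rewrite ?lt_min ?sp0 ?divr_gt0 // ge_min spT.
move=> u /andP[u0]; rewrite lt_min => /andP[usp ux0].
have uT : 0 <= u <= T by rewrite ltW //= (le_trans (ltW usp)).
have v1p : 0 < v 1 u by apply: Hsp; rewrite u0 ltW.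
have v1x : v 1 u < x0.
  by apply: (le_lt_trans (HC u uT)); move: ux0; rewrite ltr_pdivlMr // mulrC.
have [f_m1 f_sing] := f_le_near0 (ltac:(by rewrite v1p) : 0 < v 1 u < x0).
have hu : 0 < h u by apply: h_gt0; rewrite u0; case/andP: uT.
have DE : D u = h u * - f (v 1 u) by rewrite /D /G normrM gtr0_norm // ltr0_norm //; lra.
by rewrite DE; split; [|rewrite ler_pMr //; lra | rewrite mulrCA ler_pM2l //; lra].
Qed.

Section large_slopes.
Variables (C1 s1 : R).
Hypothesis C1_ge1 : 1 <= C1.
Hypothesis s1_gt0 : 0 < s1.
Hypothesis s1_le : s1 <= T.
Hypothesis v1_le : forall u, 0 <= u <= T -> v 1 u <= C1 * u.
Hypothesis v1_dom : forall u, 0 < u < s1 ->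
  [/\ 0 < v 1 u, h u <= D u & h u * (v 1 u `^ m)^-1 <= 2 * D u].

Lemma D_integrable : mu.-integrable `]0, s1[ (EFin \o D).
Proof. by apply: integrable_norm; apply: sol_int; rewrite // (ltW s1_gt0) s1_le. Qed.

Lemma integral_le_below_level a B M : 0 < a -> 0 < M <= s1 ->
  (forall u, 0 < u < M -> 0 < v a u <= B) ->
  \int[mu]_(x in `]0, M[) G a x <= (2 * B `^ l + Cf) * \int[mu]_(x in `]0, M[) D x.
Proof.
move=> a0 /andP[M0 Ms1] vbnd; have MT := le_trans Ms1 s1_le.
have sub : [set` `]0, M[] `<=` [set` `]0, s1[] by apply: subset_itvl; rewrite bnd_simp.
rewrite -RintegralZl_itv; last exact: integrable_itvS sub D_integrable.
apply: le_Rintegral_itv; first by apply: sol_int; rewrite // ltW.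
  exact: integrableZl_itv (integrable_itvS sub D_integrable).
move=> u; rewrite in_itv /= => uM; have /andP[vp vB] := vbnd u uM; have /andP[u0 uM'] := uM.
have [_ hD _] := v1_dom (ltac:(by rewrite u0 (lt_le_trans uM' Ms1)) : 0 < u < s1).
have hu : 0 < h u by apply: h_gt0; rewrite u0 (le_trans (ltW uM')).
apply: (le_trans (y := h u * (2 * B `^ l + Cf))).
  rewrite ler_pM2l // (le_trans (f_le vp)) // lerD2r ler_pM2l //.
  exact: ler_powR2r (ltW l_gt0) (ltW vp) vB.
by rewrite mulrC ler_wpM2l // addr_ge0 // mulr_ge0 // powR_ge0.
Qed.

(* Below the level B the integral term stays below a^(p-1)/2, so phi_p(v_a')
   cannot drop to (theta a)^(p-1) before v_a exceeds B. *)
Lemma escape a B d : 0 < a -> 0 < B -> 0 < d -> d <= s1 -> 2 * B < theta p * a * d ->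
  (forall s, 0 <= s <= d -> theta p * a * s <= B ->
     (2 * B `^ l + Cf) * \int[mu]_(x in `]0, s[) D x < a `^ (p - 1) / 2) ->
  exists2 ts, 0 < ts <= d & B <= v a ts /\ forall u, 0 <= u < ts -> theta p * a < dv a u.
Proof.
move=> a0 B0 d0 ds1 Bd small; set k := theta p * a in Bd small *.
have k0 : 0 < k by rewrite mulr_gt0 ?theta_gt0.
have dT : d <= T := le_trans ds1 s1_le.
have grow t : 0 <= t <= d -> (forall u, 0 <= u < t -> k < dv a u) -> k * t <= v a t.
  move=> /andP[t0 td] H; apply: v_ge_slope => //; first by rewrite t0 (le_trans td).
  by move=> u /andP[u0 ut]; rewrite ltW // H // ltW.
have [[t [td dvt]]|above] := pselect (exists t, 0 <= t <= d /\ dv a t <= k); last first.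
  have dv_above u : 0 <= u <= d -> k < dv a u.
    by move=> ud; rewrite ltNge; apply/negP => dvu; apply: above; exists u.
  exists d; first by rewrite d0 lexx.
  split => [|u /andP[u0 ud]]; last by rewrite dv_above // u0 ltW.
  suff : k * d <= v a d by lra.
  apply: grow => [|u /andP[u0 ud]]; first by rewrite ltW //= lexx.
  by rewrite dv_above // u0 ltW.
have dvc : {within `[0, d], continuous (dv a)}.
  apply: continuous_subspaceW (dv_continuous a0) => u /=; rewrite !in_itv /=.
  by move=> /andP[-> ud]; exact: le_trans ud dT.
have [M0 Mt dvM dv_gt] := first_hitP dvc (dv_gt_theta a0) td dvt.
set M := first_hit d k (dv a) in M0 Mt dvM dv_gt.
have Md : M <= d by case/andP: td => _; apply: le_trans Mt.
have MT : 0 <= M <= T by rewrite ltW //= (le_trans Md dT).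
have vM : k * M <= v a M by apply: grow; rewrite ?(ltW M0) ?Md.
have [BvM|vMB] := leP B (v a M); first by exists M; rewrite ?M0 ?Md.
have vbnd u : 0 < u < M -> 0 < v a u <= B.
  move=> /andP[u0 uM]; apply/andP; split.
    apply: lt_le_trans (grow u _ _); first by rewrite mulr_gt0.
      by rewrite ltW //= ltW // (lt_le_trans uM Md).
    by move=> c /andP[c0 cu]; apply: dv_gt; rewrite c0 (lt_trans cu).
  apply: le_trans (ltW vMB); apply: v_nondecreasing => //; [exact: ltW | exact: ltW | by case/andP: MT |].
  move=> c /andP[uc cM]; apply: ltW (lt_trans k0 (dv_gt c _)).
  by rewrite cM ltW // (lt_trans u0).
have IG : \int[mu]_(x in `]0, M[) G a x < a `^ (p - 1) / 2.
  apply: le_lt_trans (small M _ _); last lra; last by rewrite ltW //= Md.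
  by apply: integral_le_below_level; rewrite // M0 (le_trans Md ds1).
have := sol_eq a0 MT; rewrite dvM phi_pE // theta_powR ?ltW //; lra.
Qed.

Lemma integrand_ge_near0 a u : 0 < a -> 0 < u < s1 -> v 1 u <= v a u ->
  - (2 + C0) * D u <= G a u.
Proof.
move=> a0 us1 v1va; have [v1p hD1 hD] := v1_dom us1.
have hu : 0 < h u.
  by apply: h_gt0; case/andP: us1 => u0 us; rewrite u0 ltW // (lt_le_trans us s1_le).
have vap : 0 < v a u := lt_le_trans v1p v1va.
have sing := lef_powRV2 m_ge0 v1p v1va.
have Gge : - (h u * (v 1 u `^ m)^-1) - C0 * h u <= G a u.
  have -> : - (h u * (v 1 u `^ m)^-1) - C0 * h u = h u * (- (v 1 u `^ m)^-1 - C0) by ring.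
  by rewrite /G ler_pM2l //; have := f_ge vap; lra.
have : C0 * h u <= C0 * D u by rewrite ler_wpM2l.
by move: hD Gge; lra.
Qed.

Lemma integral_ge_near0 a d : 0 < a -> 0 < d <= s1 ->
  (forall u, 0 < u < d -> v 1 u <= v a u) ->
  - (2 + C0) * \int[mu]_(x in `]0, d[) D x <= \int[mu]_(x in `]0, d[) G a x.
Proof.
move=> a0 /andP[d0 ds1] v1_va.
have sub : [set` `]0, d[] `<=` [set` `]0, s1[] by apply: subset_itvl; rewrite bnd_simp.
rewrite -RintegralZl_itv; last exact: integrable_itvS sub D_integrable.
apply: le_Rintegral_itv; first exact: integrableZl_itv (integrable_itvS sub D_integrable).
  by apply: sol_int; rewrite // ltW //= (le_trans ds1 s1_le).
move=> u; rewrite in_itv /= => /andP[u0 ud].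
by apply: integrand_ge_near0; rewrite ?v1_va ?u0 // (lt_le_trans ud ds1).
Qed.

Lemma reference_le_v a B ts u : 0 < a -> 0 < ts -> 0 < u <= T ->
  C1 <= theta p * a -> (forall c, 0 <= c < ts -> theta p * a < dv a c) ->
  C1 * T <= B -> B <= v a ts -> (forall c, ts < c < u -> 0 <= dv a c) ->
  v 1 u <= v a u.
Proof.
move=> a0 ts0 /andP[u0 uT] C1k dv_ts C1TB Bts dv_u.
have uT' : 0 <= u <= T by rewrite ltW.
apply: le_trans (v1_le uT') _; have [uts|tsu] := leP u ts.
  apply: le_trans (v_ge_slope (k := theta p * a) a0 uT' _); first by rewrite ler_pM2r.
  by move=> c /andP[c0 cu]; apply/ltW/dv_ts; rewrite ltW //= (lt_le_trans cu).
apply: (le_trans (y := B)).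
  by apply: le_trans C1TB; rewrite ler_wpM2l ?(le_trans ler01 C1_ge1).
by apply: (le_trans Bts); apply: v_nondecreasing => //; exact: ltW.
Qed.

(* Past the level B the nonlinearity is of size B^l on [d, 2d], which outweighs
   a^(p-1) and the bounded contribution of (0, d). *)
Lemma turns_back a B d ts hm : 0 < a -> 0 < d -> 2 * d <= s1 -> 0 < ts <= d ->
  B <= v a ts -> (forall u, 0 <= u < ts -> theta p * a < dv a u) ->
  C1 <= theta p * a -> C1 * T <= B -> X <= B ->
  0 < hm -> (forall t, d <= t <= 2 * d -> hm <= h t) ->
  2 * a `^ (p - 1) <= hm * (B `^ l / 2) * d ->
  (2 + C0) * \int[mu]_(x in `]0, d[) D x < a `^ (p - 1) ->
  exists2 t, 0 <= t <= 2 * d & dv a t <= 0.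
Proof.
move=> a0 d0 ds1 /andP[ts0 tsd] Bts dv_ts C1k C1TB XB hm0 h_far far near.
have d2T : 2 * d <= T := le_trans ds1 s1_le.
have dd : d <= 2 * d by lra.
have d2 : 0 <= 2 * d <= T by rewrite d2T andbT; lra.
have B0 : 0 < B by apply: lt_le_trans C1TB; rewrite mulr_gt0 // (lt_le_trans ltr01 C1_ge1).
apply: contrapT => no_turn.
have dv_gt0 t : 0 <= t <= 2 * d -> 0 < dv a t.
  by move=> td; rewrite ltNge; apply/negP => dvt; apply: no_turn; exists t.
have dv_ge0 x y : 0 <= x -> y <= 2 * d -> forall c, x < c < y -> 0 <= dv a c.
  move=> x_ge0 y2d c /andP[xc cy]; apply/ltW/dv_gt0.
  by rewrite ltW ?(le_lt_trans x_ge0 xc) //= ltW // (lt_le_trans cy).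
have v_ge_B u : ts <= u <= 2 * d -> B <= v a u.
  move=> /andP[tsu u2d]; apply: (le_trans Bts); apply: v_nondecreasing; rewrite // ?(le_trans u2d) //.
    exact: ltW.
  exact: dv_ge0 _ _ (ltW ts0) u2d.
have v1_va u : 0 < u < d -> v 1 u <= v a u.
  move=> /andP[u0 ud]; apply: (reference_le_v a0 ts0 _ C1k dv_ts C1TB Bts).
    by rewrite u0; lra.
  by apply: dv_ge0 (ltW ts0) _; lra.
have Inear := integral_ge_near0 a0 (ltac:(by rewrite d0; lra) : 0 < d <= s1) v1_va.
have i2d : mu.-integrable `]0, 2 * d[ (EFin \o G a) by apply: sol_int.
have Ifar : hm * (B `^ l / 2) * (2 * d - d) <= \int[mu]_(x in `[d, 2 * d[) G a x.
  apply: Rintegral_itv_ge_cst => //.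
    by apply: integrable_itvS i2d; apply: subset_itvr; rewrite bnd_simp.
  move=> u /andP[du u2d]; have Bv : B <= v a u by apply: v_ge_B; rewrite (le_trans tsd du) ltW.
  rewrite /G; apply: ler_pM; [exact: ltW | by rewrite divr_ge0 ?powR_ge0 |
    by rewrite h_far ?du ?ltW |].
  apply: le_trans (f_ge_large (le_trans XB Bv)); rewrite ler_pM2r //.
  exact: ler_powR2r (ltW l_gt0) (ltW B0) Bv.
have C0D : 0 <= C0 * \int[mu]_(x in `]0, d[) D x.
  by rewrite mulr_ge0 // Rintegral_ge0 // => x _; rewrite normr_ge0.
have dvE := sol_eq a0 d2; rewrite (Rintegral_itv_split _ dd i2d) // in dvE.
have : phi_p p (dv a (2 * d)) < 0.
  (* abstract the integrals away: lra cannot handle them in the context *)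
  rewrite dvE; move: Inear Ifar C0D far near.
  move: (\int[mu]_(x in `]0, d[) G a x) (\int[mu]_(x in `[d, 2 * d[) G a x).
  move: (\int[mu]_(x in `]0, d[) D x) => ID I1 I2; lra.
by move/phi_p_lt0; rewrite ltNge ltW // dv_gt0 // lexx andbT mulr_ge0 // ltW.
Qed.

Lemma eventually_escape d kap Y : 0 < d -> d <= s1 -> 0 < kap -> \forall a \near +oo,
  exists2 ts, 0 < ts <= d & [/\ Y <= level kap a, level kap a <= v a ts &
    forall u, 0 <= u < ts -> theta p * a < dv a u].
Proof.
move=> d0 ds1 kap0.
have kapl0 : 0 < 2 * kap `^ l + 1 by rewrite ltr_wpDl // mulr_ge0 // powR_ge0.
pose eta := (4 * (2 * kap `^ l + 1))^-1.
have eta0 : 0 < eta by rewrite invr_gt0 mulr_gt0.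
have s1T : 0 <= s1 <= T by rewrite ltW //= s1_le.
have [rho rho0 Hrho] := integral_itv_small (sol_int ltr01 s1T) eta0.
near=> a.
have a0 : 0 < a by near: a; apply: nbhs_pinfty_gt; exact: num_real.
have Cf_le : Cf < a `^ (p - 1) by near: a; apply: powR_eventually_gt; rewrite subr_gt0.
have [BY Bsmall] : Num.max Y 1 <= level kap a /\ 2 * level kap a < theta p * a * Num.min d rho.
  by near: a; apply: level_eventually; rewrite // lt_min d0 rho0.
have Bl := level_powR kap0 a0; set B := level kap a in BY Bsmall Bl *.
move: BY; rewrite ge_max => /andP[YB B1].
have [ts tsd [Bts dv_ts]] : exists2 ts, 0 < ts <= d &
    B <= v a ts /\ forall u, 0 <= u < ts -> theta p * a < dv a u.
  apply: escape => //; first by lra.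
    by apply: (lt_le_trans Bsmall); rewrite ler_pM2l ?mulr_gt0 ?theta_gt0 // ge_min lexx.
  move=> s /andP[s0 sd] sB; have srho : s < rho.
    rewrite -(@ltr_pM2l _ (theta p * a)) ?mulr_gt0 ?theta_gt0 //.
    have : theta p * a * Num.min d rho <= theta p * a * rho.
      by rewrite ler_pM2l ?mulr_gt0 ?theta_gt0 // ge_min lexx orbT.
    have : 0 <= theta p * a * s by rewrite !mulr_ge0 // ltW // theta_gt0.
    lra.
  have Is := Hrho s ltac:(by rewrite s0 (le_trans sd ds1)) srho.
  have Is0 : 0 <= \int[mu]_(x in `]0, s[) D x by apply: Rintegral_ge0 => x _; exact: normr_ge0.
  have Fle : 2 * B `^ l + Cf <= (2 * kap `^ l + 1) * a `^ (p - 1).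
    have -> : (2 * kap `^ l + 1) * a `^ (p - 1) = 2 * (kap `^ l * a `^ (p - 1)) + a `^ (p - 1).
      by ring.
    by rewrite Bl lerD2l ltW.
  apply: le_lt_trans (ler_wpM2r Is0 Fle) _.
  have -> : a `^ (p - 1) / 2 = (2 * kap `^ l + 1) * a `^ (p - 1) * (2 * eta).
    by rewrite /eta; field; rewrite gt_eqF.
  by rewrite ltr_pM2l ?mulr_gt0 ?powR_gt0 // (lt_trans Is) // ltr_pMl // ltr1n.
by exists ts.
Unshelve. all: end_near.
Qed.

Lemma eventually_escape_and_turn d Bmin : 0 < d -> 2 * d <= s1 -> \forall a \near +oo,
  exists2 ts, 0 < ts <= d & [/\ Bmin <= v a ts, forall u, 0 <= u < ts -> 0 < dv a u &
    exists2 t, 0 <= t <= 2 * d & dv a t <= 0].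
Proof.
move=> d0 ds1; have d2T : 2 * d <= T := le_trans ds1 s1_le.
have dd : d <= 2 * d by lra.
have [hm hm0 h_far] := h_ge d0 dd d2T.
pose kap := Num.max 1 ((4 / (hm * d)) `^ l^-1).
have kap0 : 0 < kap by rewrite lt_max ltr01.
have kap_l : 4 <= hm * d * kap `^ l.
  rewrite mulrC -ler_pdivrMr ?mulr_gt0 //.
  have -> : 4 / (hm * d) = ((4 / (hm * d)) `^ l^-1) `^ l.
    by rewrite -powRrM mulVf ?gt_eqF ?powRr1 // divr_ge0 // ltW // mulr_gt0.
  by apply: ler_powR2r; rewrite ?powR_ge0 ?le_max ?lexx ?orbT // ltW.
near=> a.
have a0 : 0 < a by near: a; apply: nbhs_pinfty_gt; exact: num_real.
have aC1 : C1 / theta p < a by near: a; apply: nbhs_pinfty_gt; exact: num_real.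
have big_p : Cf + (2 + C0) * \int[mu]_(x in `]0, d[) D x < a `^ (p - 1).
  by near: a; apply: powR_eventually_gt; rewrite subr_gt0.
have [ts tsd [BY Bts dv_ts]] : exists2 ts, 0 < ts <= d &
    [/\ Num.max Bmin (Num.max (C1 * T) X) <= level kap a, level kap a <= v a ts &
        forall u, 0 <= u < ts -> theta p * a < dv a u].
  by near: a; apply: eventually_escape => //; lra.
have Bl := level_powR kap0 a0; set B := level kap a in BY Bts Bl.
move: BY; rewrite !ge_max => /and3P[BminB C1TB XB].
have ap0 : 0 < a `^ (p - 1) by rewrite powR_gt0.
exists ts => //; split => [|u /dv_ts|]; first exact: le_trans BminB Bts.
  exact: lt_trans (mulr_gt0 (theta_gt0 p) a0).
apply: (turns_back a0 d0 ds1 tsd Bts dv_ts _ C1TB XB hm0 h_far).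
- by rewrite -ler_pdivrMl ?theta_gt0 // ltW.
- rewrite Bl; have := ler_wpM2r (ltW ap0) kap_l.
  have -> : hm * (kap `^ l * a `^ (p - 1) / 2) * d = hm * d * kap `^ l * a `^ (p - 1) / 2 by ring.
  lra.
- by apply: le_lt_trans big_p; apply: ler_wpDl => //; exact: lexx.
Unshelve. all: end_near.
Qed.

Lemma eventually_first_max d Bmin : 0 < d -> 2 * d <= s1 -> \forall a \near +oo,
  [/\ 0 < first_hit T 0 (dv a), first_hit T 0 (dv a) <= 2 * d,
      dv a (first_hit T 0 (dv a)) = 0,
      forall t, 0 <= t < first_hit T 0 (dv a) -> 0 < dv a t &
      Bmin <= v a (first_hit T 0 (dv a))].
Proof.
move=> d0 ds1; have d2T : 2 * d <= T := le_trans ds1 s1_le.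
near=> a.
have a0 : 0 < a by near: a; apply: nbhs_pinfty_gt; exact: num_real.
have [ts /andP[ts0 tsd] [Bts dv_ts [t /andP[t0 td] dvt]]] :
    exists2 ts, 0 < ts <= d & [/\ Bmin <= v a ts, forall u, 0 <= u < ts -> 0 < dv a u &
      exists2 t, 0 <= t <= 2 * d & dv a t <= 0].
  by near: a; exact: eventually_escape_and_turn.
have dv0 : 0 < dv a 0 by apply: dv_ts; rewrite lexx.
have tT : 0 <= t <= T by rewrite t0 (le_trans td d2T).
have [M0 Mt dvM dv_pos] := first_hitP (dv_continuous a0) dv0 tT dvt.
set M := first_hit T 0 (dv a) in M0 Mt dvM dv_pos *.
have tsM : ts <= M.
  by rewrite leNgt; apply/negP => Mts; have := dv_ts M; rewrite dvM ltxx ltW //= Mts => /(_ isT).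
split => //; first exact: le_trans Mt td.
apply: (le_trans Bts); apply: v_nondecreasing => //; first exact: ltW.
  by apply: le_trans Mt _; case/andP: tT.
by move=> c /andP[tsc cM]; apply/ltW/dv_pos; rewrite cM ltW // (lt_trans ts0 tsc).
Unshelve. all: end_near.
Qed.

End large_slopes.

Lemma first_max_asymptotics : exists a0 : R, exists M : R -> R,
  (forall a, a0 < a ->
     [/\ 0 < M a, M a < T, dv a (M a) = 0 & forall t, 0 <= t < M a -> 0 < dv a t]) /\
  M a @[a --> +oo] --> (0 : R) /\ v a (M a) @[a --> +oo] --> +oo.
Proof.
have [C1 [s1 [[C11 s10 s1T v1_le] v1_dom]]] := reference_dominates.
have first_max := eventually_first_max C11 s10 s1T v1_le v1_dom.
have s14 : 0 < s1 / 4 by rewrite divr_gt0.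
have s14s1 : 2 * (s1 / 4) <= s1 by lra.
have [a0 [_ Ha0]] := first_max (s1 / 4) 0 s14 s14s1.
exists a0, (fun a => first_hit T 0 (dv a)); split; [|split].
- move=> a /Ha0 [M0 M2d dvM dv_pos _]; split => //.
  by apply: le_lt_trans M2d _; apply: lt_le_trans s1T; lra.
- apply/cvgrPdist_lt => e e0.
  have de0 : 0 < Num.min (s1 / 4) (e / 4) by rewrite lt_min s14 divr_gt0.
  have de : 2 * Num.min (s1 / 4) (e / 4) <= s1.
    by apply: le_trans s14s1; rewrite ler_pM2l // ge_min lexx.
  apply: filterS (first_max _ 0 de0 de) => a [M0 M2d _ _ _].
  rewrite sub0r normrN gtr0_norm //; apply: le_lt_trans M2d _.
  have : Num.min (s1 / 4) (e / 4) <= e / 4 by rewrite ge_min lexx orbT.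
  lra.
- apply/cvgryPge => Bmin.
  by apply: filterS (first_max (s1 / 4) Bmin s14 s14s1) => a [].
Qed.

End shooting.

Section solutions.
Variable R : realType.
Local Notation mu := (@lebesgue_measure R).
Variables (N : nat) (p : R) (K f : R -> R) (a T : R) (v dv : R -> R).
Hypothesis T_gt0 : 0 < T.
Hypothesis sol : is_solution N p K f a T v dv.

Lemma solution_integrable t : 0 <= t <= T ->
  mu.-integrable `]0, t[ (EFin \o (fun s => hfun N p K s * f (v s))).
Proof.
move=> /andP[_ tT]; case: sol => _ [_ [iT _]].
apply: integrable_itvS (iT T _); last by rewrite T_gt0 lexx.
by apply: subset_itvl; rewrite bnd_simp.
Qed.

Lemma solution_eq t : 0 <= t <= T ->
  phi_p p (dv t) = a `^ (p - 1) - \int[mu]_(s in `]0, t[) (hfun N p K s * f (v s)).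
Proof.
move=> tT; apply: EFin_integral_eqB; first exact: solution_integrable.
by case: sol => _ [_ [_ ->]].
Qed.

End solutions.

Theorem lemma2p5 (R : realType) (N : nat) (p : R) (f g1 g2 : R -> R)
    (l m beta : R) (K dK : R -> R) (R0 K0 K1 alpha alpha1 : R)
    (v dv : R -> R -> R) :
  (2 < N)%N -> 1 < p -> p < N%:R ->
  (* f odd and locally Lipschitz on R \ {0} *)
  (forall u, u != 0 -> f (- u) = - f u) ->
  loc_lipschitz_on [set u | u != 0] f ->
  (* (H1) *)
  loc_lipschitz_on setT g1 -> p - 1 < l ->
  (exists U : R, forall u, U < `|u| -> f u = `|u| `^ (l - 1) * u + g1 u) ->
  (fun u => `|g1 u| / `|u| `^ l) @ +oo --> (0 : R) ->
  (* (H2) *)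
  loc_lipschitz_on setT g2 -> g2 0 = 0 -> 0 < m < 1 ->
  (exists2 del : R, 0 < del & forall u, 0 < `|u| < del ->
      f u = - (1 / (`|u| `^ (m - 1) * u)) + g2 u) ->
  (* (H3) *)
  0 < beta -> f beta = 0 ->
  (forall u, 0 < u -> f u = 0 -> u = beta) ->
  (forall u, 0 < u < beta -> f u < 0) ->
  (forall u, beta < u -> 0 < f u) ->
  (* (H4) *)
  0 < R0 -> C1_on `[R0, +oo[ K dK ->
  (forall r, R0 <= r -> 0 < K r) ->
  (forall r, R0 <= r -> - ((N%:R - 1) * p / (p - 1)) < r * dK r / K r) ->
  0 < K0 -> 0 < K1 ->
  (forall r, R0 <= r -> K0 / r `^ alpha <= K r /\ K r <= K1 / r `^ alpha1) ->
  N%:R + m * (N%:R - p) / (p - 1) < alpha1 -> alpha1 <= alpha ->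
  alpha < 2 * (N%:R - 1) ->
  (* v a is the solution on [0,T], T = R0^((p-N)/(p-1)), with derivative dv a *)
  (forall a, 0 < a ->
     is_solution N p K f a (R0 `^ ((p - N%:R) / (p - 1))) (v a) (dv a)) ->
  exists a0 : R, exists M : R -> R,
    (forall a, a0 < a ->
       [/\ 0 < M a, M a < R0 `^ ((p - N%:R) / (p - 1)), dv a (M a) = 0 &
           forall t, 0 <= t < M a -> 0 < dv a t]) /\
    M a @[a --> +oo] --> (0 : R) /\
    v a (M a) @[a --> +oo] --> +oo.
Proof.
move=> _ p_gt1 p_ltN _ f_lip _ l_gt f_infty g1_small g2_lip g2_0 /andP[m_gt0 _] f_0
  beta_gt0 _ _ f_lt0 f_gt0 R0_gt0 _ K_gt0 _ K0_gt0 _ K_bounds _ _ _ sol.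
have l_gt0 : 0 < l by lra.
have T_gt0 : 0 < R0 `^ ((p - N%:R) / (p - 1)) by rewrite powR_gt0.
have [X _ f_big] := f_large l_gt0 f_infty g1_small.
have [x0 x0_gt0 f_sing] := f_near0 m_gt0 g2_lip g2_0 f_0.
have [C0 C0_ge0 f_ge] := f_ge_singular m_gt0 f_lip g2_lip g2_0 f_0 f_gt0.
have [Cf Cf_ge0 f_le] := f_le_powR l_gt0 f_lip f_infty g1_small beta_gt0 f_lt0.
have K_ge r : R0 <= r -> K0 / r `^ alpha <= K r by move/K_bounds => [].
apply: (first_max_asymptotics (m := m) (x0 := x0) (X := X) (C0 := C0) (Cf := Cf)
  (f := f) (h := hfun N p K) p_gt1 l_gt (ltW m_gt0) T_gt0 x0_gt0) => //.
- by move=> x /f_sing[? ? _]; split.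
- by move=> x /f_big[].
- by move=> t; apply: hfun_gt0.
- exact: (hfun_ge_itv p_gt1 p_ltN R0_gt0 K0_gt0 K_ge).
- by move=> a /sol[].
- by move=> a /sol[_ [->]].
- by move=> a t /sol/solution_integrable; apply.
- by move=> a t /sol/solution_eq; apply.
Qed.
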